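(* Let $G=(V,E)$ be a finite simple graph. If the graphic matroid of $G$ has a rainbow circuit-free coloring in which each color is used at most twice, then $G$ is $(2,3)$-sparse.
   Context: The graphic matroid of $G$ has ground set $E$, independent sets being the edge sets of forests; its circuits are the edge sets of cycles. A coloring of $E$ is a partition into nonempty color classes; it is rainbow circuit-free if no cycle of $G$ has all its edges of pairwise different colors. $G$ is $(2,3)$-sparse if $|E[X]|\leq 2|X|-3$ for every $X\subseteq V$ with $|X|\geq 2$, where $E[X]$ is the set of edges with both endpoints in $X$. *)

From mathcomp Require Import all_boot.
Set Implicit Arguments. Unset Strict Implicit. Unset Printing Implicit Defensive.

Definition simple_graph (V : finType) (adj : rel V) :=
  symmetric adj /\ irreflexive adj.

Definition edges (V : finType) (adj : rel V) : {set {set V}} :=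
  [set e : {set V} | [exists x, exists y, adj x y && (e == [set x; y])]].

Definition induced_edges (V : finType) (adj : rel V) (X : {set V}) :
  {set {set V}} := [set e in edges adj | e \subset X].

Definition sparse23 (V : finType) (adj : rel V) :=
  forall X : {set V}, 2 <= #|X| -> #|induced_edges adj X| <= 2 * #|X| - 3.

Definition is_cycle (V : finType) (adj : rel V) (s : seq V) :=
  [&& uniq s, 3 <= size s & cycle adj s].

Definition cycle_edges (V : finType) (s : seq V) : {set {set V}} :=
  [set:: [seq [set p.1; p.2] | p <- zip s (rot 1 s)]].

(* Circuits of the graphic matroid: edge sets of cycles. *)
Definition circuit (V : finType) (adj : rel V) (C : {set {set V}}) :=
  exists s, is_cycle adj s /\ C = cycle_edges s.

(* A coloring of E is a partition P of E into nonempty classes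
   (finset's [partition P E] requires set0 \notin P).  The color of e is
   its block pblock P e. *)
Definition coloring (V : finType) (adj : rel V) (P : {set {set {set V}}}) :=
  partition P (edges adj).

Definition rainbow (V : finType) (P : {set {set {set V}}}) (C : {set {set V}}) :=
  forall e f, e \in C -> f \in C -> e != f -> pblock P e != pblock P f.

Definition rainbow_circuit_free (V : finType) (adj : rel V)
  (P : {set {set {set V}}}) :=
  forall C, circuit adj C -> ~ rainbow P C.

From mathcomp Require Import all_boot zify.
Set Implicit Arguments. Unset Strict Implicit. Unset Printing Implicit Defensive.

(* Suppose some X with |X| >= 2 spans at least 2|X| - 2 edges.  A nonempty set
   of edges inside Y with at least |Y| edges contains a cycle (peel off
   vertices of degree <= 1, then a maximal path closes up), so a rainbow edge
   set inside Y has fewer than |Y| edges.  One edge per colour of E[X] is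
   rainbow, hence there are at most |X| - 1 colours on E[X]; since a colour
   is used at most twice, there are exactly |X| - 1 of them, each used twice
   inside X.  Every v in X then lies on both edges of some colour: otherwise
   one edge per colour avoiding v is a rainbow set of |X| - 1 edges on X - v.
   Two distinct edges share at most one vertex, so this assigns distinct
   colours to distinct vertices, and |X| <= |X| - 1. *)

Lemma last_take_nth (T : Type) (x : T) (q : seq T) j :
  j < size q -> last x (take j.+1 q) = nth x q j.
Proof.
elim: q x j => [|y q IHq] x [|j] //= ltj; first by rewrite take0.
by rewrite IHq // (set_nth_default x).
Qed.

Lemma sub_is_cycle (T : finType) (r r' : rel T) c :
  subrel r r' -> is_cycle r c -> is_cycle r' c.
Proof. by move=> rr' /and3P[uc sc /(sub_cycle rr') cc]; rewrite /is_cycle uc sc cc. Qed.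

Lemma mem_zip_path (T : eqType) (r : rel T) x q a b :
  path r x q -> (a, b) \in zip (x :: q) q -> r a b.
Proof.
elim: q x => [|y q IHq] x //= /andP[rxy pq].
by rewrite inE => /orP[/eqP[-> ->] // | /IHq]; apply.
Qed.

Lemma zip_cons_rcons (T : Type) x (p : seq T) y :
  zip (x :: p) (rcons p y) = zip (x :: rcons p y) (rcons p y).
Proof. by elim: p x => [|a p IHp] x //=; rewrite IHp. Qed.

Section Cycles.

Variables (V : finType) (r : rel V).
Hypotheses (r_sym : symmetric r) (r_irr : irreflexive r).

Lemma chord_cycle z a q w :
  uniq [:: z, a & q] -> path r z (a :: q) -> r z w -> w \in q ->
  exists c, is_cycle r c.
Proof.
move=> uq /= /andP[rza pq] rzw wq; set j := index w q.
have ltj : j < size q by rewrite index_mem.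
exists (take j.+3 [:: z, a & q]); rewrite /is_cycle take_uniq //=.
rewrite size_take /= !ltnS rza rcons_path take_path //= last_take_nth //.
by rewrite nth_index // r_sym rzw andbT; case: ifP => // _; apply: leq_ltn_trans ltj.
Qed.

Hypothesis r_deg2 : forall x y, r x y -> 1 < #|[set w | r y w]|.

(* Grow the path at its head z: a neighbour of z other than a either lies on
   the path, closing a cycle, or extends the path. *)
Lemma path_cycle z a q :
  uniq [:: z, a & q] -> path r z (a :: q) -> exists c, is_cycle r c.
Proof.
have [n] := ubnP (#|V| - size q); elim: n z a q => // n IHn z a q lt_n uq pq.
have rza : r z a by case/andP: pq.
have [w1 [w2 []]] := card_gt1P (r_deg2 (etrans (r_sym a z) rza)).
rewrite !inE => rzw1 rzw2 w12.
have [w [rzw wa]] : exists w, r z w /\ w != a.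
  by case: (eqVneq w1 a) => [eq1a|]; [exists w2; rewrite -eq1a eq_sym | exists w1].
have wz : w != z by apply: contraTneq rzw => ->; rewrite r_irr.
case: (boolP (w \in q)) => [wq | wNq]; first exact: chord_cycle uq pq rzw wq.
have uwq : uniq [:: w, z, a & q] by rewrite cons_uniq uq !inE !negb_or wz wa wNq.
have sizeq : (size q).+3 <= #|V| by rewrite -[X in X <= _](card_uniqP uwq) max_card.
apply: (IHn w z (a :: q) _ uwq); last by rewrite /= r_sym rzw.
rewrite [size _]/= subnS prednK // subn_gt0; exact: ltnW (ltnW sizeq).
Qed.

Lemma min_degree2_cycle x y : r x y -> exists c, is_cycle r c.
Proof.
move=> rxy; apply: (@path_cycle x y [::]); rewrite /= ?rxy //.
by rewrite inE andbT; apply: contraTneq rxy => ->; rewrite r_irr.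
Qed.

End Cycles.
Section TwoSets.

Variable V : finType.
Implicit Types (Y : {set V}) (F : {set {set V}}).

Definition edge_rel F : rel V := fun x y => [set x; y] \in F.

Lemma edge_rel_sym F : symmetric (edge_rel F).
Proof. by move=> x y; rewrite /edge_rel setUC. Qed.

Lemma edge_rel_irr F : (forall e, e \in F -> #|e| = 2) -> irreflexive (edge_rel F).
Proof. by move=> F2 x; apply/negP => /F2; rewrite setUid cards1. Qed.

Lemma cycle_edges_sub F c : cycle (edge_rel F) c -> {subset cycle_edges c <= F}.
Proof.
case: c => [|x p]; first by move=> _ e; rewrite inE.
rewrite /cycle_edges rot1_cons zip_cons_rcons => cyc e.
by rewrite inE => /mapP[[a b] /(mem_zip_path cyc) + ->].
Qed.

Lemma set2_mem (e : {set V}) y :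
  #|e| = 2 -> y \in e -> exists2 w, w != y & e = [set y; w].
Proof.
move/eqP/cards2P=> [a [b [ab ->]]]; rewrite !inE => /orP[] /eqP->.
  by exists b; rewrite // eq_sym.
by exists a; rewrite // setUC.
Qed.

Lemma card_edges_avoiding F y : (forall e, e \in F -> #|e| = 2) ->
  #|F| <= #|[set e in F | y \notin e]| + #|[set w | edge_rel F y w]|.
Proof.
move=> F2; rewrite -(cardsID [set e : {set V} | y \in e] F) addnC leq_add //.
  by apply/subset_leq_card/subsetP=> e; rewrite !inE andbC.
apply: leq_trans (leq_imset_card (fun w => [set y; w]) _).
apply/subset_leq_card/subsetP=> e /setIP[eF]; rewrite inE => ye.
have [w _ ew] := set2_mem (F2 e eF) ye.
by apply/imsetP; exists w; rewrite // inE /edge_rel -ew.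
Qed.

Lemma dense_family_cycle Y F :
  (forall e, e \in F -> #|e| = 2) -> (forall e, e \in F -> e \subset Y) ->
  0 < #|F| -> #|Y| <= #|F| -> exists c, is_cycle (edge_rel F) c.
Proof.
have [n] := ubnP #|Y|; elim: n Y F => // n IHn Y F ltYn F2 FY.
move=> /card_gt0P[e0 e0F] leYF.
have Y2 : 2 <= #|Y| by rewrite -(F2 e0 e0F) subset_leq_card ?FY.
case: (boolP [exists y in Y, #|[set w | edge_rel F y w]| <= 1]).
  case/exists_inP=> y yY deg_y; set F' := [set e in F | y \notin e].
  have F'F : subrel (edge_rel F') (edge_rel F).
    by move=> a b; rewrite /edge_rel inE => /andP[].
  have := card_edges_avoiding y F2; rewrite -/F' => leFF'.
  have cardY : #|Y| = #|Y :\ y|.+1 by rewrite (cardsD1 y Y) yY.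
  have [c cF'] : exists c, is_cycle (edge_rel F') c.
    apply: (IHn (Y :\ y)) => [|e /setIdP[/F2] //|e /setIdP[/FY eY yNe]||].
    - by rewrite -ltnS -cardY.
    - by rewrite subsetD1 eY.
    - by lia.
    - by lia.
  by exists c; apply: sub_is_cycle cF'.
move/exists_inPn => deg2.
have /cards2P[x [z [xz e0E]]] : #|e0| == 2 by rewrite F2.
apply: (min_degree2_cycle (edge_rel_sym F) (edge_rel_irr F2) _ (x := x) (y := z)).
  move=> a b /FY /subsetP /(_ b); rewrite !inE eqxx orbT => /(_ isT) /deg2.
  by rewrite ltnNge.
by rewrite /edge_rel -e0E.
Qed.

End TwoSets.

Section SimpleGraph.

Variables (V : finType) (adj : rel V).
Hypothesis adj_simple : simple_graph adj.
Implicit Types (Y : {set V}) (F : {set {set V}}).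

Lemma edge_card e : e \in edges adj -> #|e| = 2.
Proof.
case: adj_simple => _ irr; rewrite inE => /existsP[x /existsP[y /andP[axy /eqP->]]].
by rewrite cards2; case: eqP axy => [->|//]; rewrite irr.
Qed.

Lemma edge_eq_set2 e v w :
  e \in edges adj -> v \in e -> w \in e -> v != w -> e = [set v; w].
Proof.
move=> eE ve we vw; apply/esym/eqP; rewrite eqEcard edge_card // cards2 vw.
by rewrite andbT; apply/subsetP => z; rewrite !inE => /orP[] /eqP->.
Qed.

Lemma edge_adj x y : [set x; y] \in edges adj -> adj x y.
Proof.
case: adj_simple => sym _ xyE.
have xy : x != y by apply/eqP => exy; move: (edge_card xyE); rewrite exy setUid cards1.
move: xyE; rewrite inE => /existsP[a /existsP[b /andP[aab /eqP xyab]]].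
have : x \in [set a; b] by rewrite -xyab set21.
have : y \in [set a; b] by rewrite -xyab set22.
by rewrite !inE => /orP[] /eqP ey /orP[] /eqP ex; move: xy; rewrite ex ey ?eqxx // sym.
Qed.

Lemma card_edgeI_le1 e f :
  e \in edges adj -> f \in edges adj -> e != f -> #|e :&: f| <= 1.
Proof.
move=> eE fE ef; rewrite leqNgt; apply: contra ef.
case/card_gt1P=> v [w [/setIP[ve vf] /setIP[we wf] vw]].
by apply/eqP; rewrite (edge_eq_set2 eE ve we vw) (edge_eq_set2 fE vf wf vw).
Qed.

Lemma dense_edges_circuit F Y :
  {subset F <= edges adj} -> (forall e, e \in F -> e \subset Y) ->
  0 < #|F| -> #|Y| <= #|F| -> exists2 C, circuit adj C & C \subset F.
Proof.
move=> FE FY F0 YF.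
have [c cF] := dense_family_cycle (fun e eF => edge_card (FE e eF)) FY F0 YF.
exists (cycle_edges c); last by apply/subsetP/cycle_edges_sub; case/and3P: cF.
by exists c; split=> //; apply: sub_is_cycle cF => x y /FE /edge_adj.
Qed.

Section Coloring.

Variable P : {set {set {set V}}}.
Hypotheses (P_coloring : coloring adj P) (P_rcfree : rainbow_circuit_free adj P).
Hypothesis P_le2 : forall B, B \in P -> #|B| <= 2.

Lemma rainbow_edges_lt F Y :
  {subset F <= edges adj} -> (forall e, e \in F -> e \subset Y) ->
  {in F &, injective (pblock P)} -> 0 < #|Y| -> #|F| < #|Y|.
Proof.
move=> FE FY inj Y0; rewrite ltnNge; apply/negP => YF.
have [C circC CF] := dense_edges_circuit FE FY (leq_trans Y0 YF) YF.
apply: (P_rcfree circC) => e f eC fC; apply: contra => /eqP.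
by move/subsetP: CF => CF /inj -> //; apply: CF.
Qed.

Lemma card_colors_lt (K : {set {set {set V}}}) Y :
  (forall B, B \in K -> exists2 e, e \in edges adj & pblock P e = B /\ e \subset Y) ->
  0 < #|Y| -> #|K| < #|Y|.
Proof.
move=> Ksec Y0.
have /fin_all_exists[t tK] : forall B, exists e, B \in K ->
    [/\ e \in edges adj, pblock P e = B & e \subset Y].
  move=> B; case: (boolP (B \in K)) => [/Ksec[e eE [eB eY]] | _].
    by exists e.
  by exists set0.
have tinj : {in K &, injective t}.
  by move=> B B' /tK[_ eB _] /tK[_ eB' _] tBB'; rewrite -eB -eB' tBB'.
rewrite -(card_in_imset tinj); apply: rainbow_edges_lt => //.
- by move=> _ /imsetP[B /tK[] + _ _ ->].
- by move=> _ /imsetP[B /tK[] _ _ + ->].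
by move=> _ _ /imsetP[B /tK[_ eB _] ->] /imsetP[B' /tK[_ eB' _] ->]; rewrite eB eB' => ->.
Qed.

Definition color_class F B := [set e in F | pblock P e == B].

Lemma card_color_classes F :
  #|F| = \sum_(B in pblock P @: F) #|color_class F B|.
Proof.
rewrite -sum1_card (partition_big_imset (pblock P)).
by apply: eq_bigr => B _; rewrite sum1dep_card.
Qed.

Lemma card_color_class_le2 F B : {subset F <= edges adj} -> #|color_class F B| <= 2.
Proof.
move=> FE; have [->|[e]] := set_0Vmem (color_class F B); first by rewrite cards0.
have coverP : cover P = edges adj by case/and3P: P_coloring => /eqP.
rewrite inE => /andP[/FE eE /eqP <-].
have ePP : pblock P e \in P by apply: pblock_mem; rewrite coverP.
apply: leq_trans (P_le2 ePP).
apply/subset_leq_card/subsetP => f; rewrite inE => /andP[/FE fE /eqP <-].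
by rewrite mem_pblock coverP.
Qed.

Section DenseSubgraph.

Variable X : {set V}.
Let EX := induced_edges adj X.
Let KX := pblock P @: EX.
Hypotheses (X2 : 2 <= #|X|) (X_dense : 2 * #|X| - 3 < #|EX|).

Let EX_edges : {subset EX <= edges adj}.
Proof. by move=> e /setIdP[]. Qed.

Lemma card_induced_colors_lt : #|KX| < #|X|.
Proof.
apply: card_colors_lt => [_ /imsetP[e /setIdP[eE eX] ->]|]; first by exists e.
exact: ltnW X2.
Qed.

Let card_induced_edges_leif :
  #|EX| <= #|KX| * 2 ?= iff [forall B in KX, #|color_class EX B| == 2].
Proof.
rewrite (card_color_classes EX) -sum_nat_const.
exact: leqif_sum (fun B _ => leqif_eq (card_color_class_le2 B EX_edges)).
Qed.

Lemma card_induced_edges : #|EX| = #|KX| * 2.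
Proof.
by have [le_EX _] := card_induced_edges_leif; have := card_induced_colors_lt; lia.
Qed.

Lemma card_induced_colors : #|KX| = #|X|.-1.
Proof. by have := card_induced_colors_lt; have := card_induced_edges; lia. Qed.

Lemma card_induced_color_class B : B \in KX -> #|color_class EX B| = 2.
Proof.
have [_] := card_induced_edges_leif; rewrite card_induced_edges eqxx.
by move=> /esym/forall_inP class2 /class2/eqP.
Qed.

Lemma card_color_class_common_le1 B :
  B \in KX -> #|\bigcap_(e in color_class EX B) e| <= 1.
Proof.
move=> BK; have /card_gt1P[e [f [eB fB ef]]] : 1 < #|color_class EX B|.
  by rewrite card_induced_color_class.
have edgeB g : g \in color_class EX B -> g \in edges adj by case/setIdP=> /EX_edges.
apply: leq_trans (card_edgeI_le1 (edgeB e eB) (edgeB f fB) ef).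
by apply/subset_leq_card/subsetP=> v /bigcapP vB; rewrite inE !vB.
Qed.

Lemma vertex_on_color_class v :
  v \in X -> exists2 B, B \in KX & v \in \bigcap_(e in color_class EX B) e.
Proof.
move=> vX; case: (boolP [exists B in KX, v \in \bigcap_(e in color_class EX B) e]).
  by case/exists_inP=> B; exists B.
move/exists_inPn=> noB.
have : #|KX| < #|X :\ v|.
  apply: card_colors_lt => [B BK|]; last by move: X2; rewrite (cardsD1 v X) vX.
  have /forall_inPn[e] : ~~ [forall e in color_class EX B, v \in e].
    by apply: contra (noB B BK) => /forall_inP vB; apply/bigcapP.
  by case/setIdP=> /setIdP[eE eX] /eqP eB vNe; exists e; rewrite // subsetD1 eX.
by rewrite card_induced_colors (cardsD1 v X) vX add1n ltnn.
Qed.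

End DenseSubgraph.

Lemma coloring_sparse23 : sparse23 adj.
Proof.
move=> X X2; rewrite leqNgt; apply/negP => X_dense.
set KX := pblock P @: induced_edges adj X.
have /fin_all_exists[b bP] : forall v, exists B, v \in X ->
    B \in KX /\ v \in \bigcap_(e in color_class (induced_edges adj X) B) e.
  move=> v; case: (boolP (v \in X)) => [/(vertex_on_color_class X2 X_dense)[B] | _].
    by exists B.
  by exists set0.
have binj : {in X &, injective b}.
  move=> v w /bP[BK vB] /bP[_]; rewrite -/KX => + bvw; rewrite -bvw => wB.
  exact: card_le1_eqP (card_color_class_common_le1 X2 X_dense BK) _ _ wB vB.
have := card_induced_colors_lt X2; rewrite -/KX ltnNge => /negP; apply.
rewrite -(card_in_imset binj); apply/subset_leq_card/subsetP.
by move=> _ /imsetP[v /bP[BK _] ->].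
Qed.

End Coloring.

End SimpleGraph.

Theorem theorem9 (V : finType) (adj : rel V) :
  simple_graph adj ->
  (exists P : {set {set {set V}}},
      [/\ coloring adj P, rainbow_circuit_free adj P &
          forall B, B \in P -> #|B| <= 2]) ->
  sparse23 adj.
Proof.
move=> adj_simple [P [P_coloring P_rcfree P_le2]].
exact: (coloring_sparse23 adj_simple P_coloring P_rcfree P_le2).
Qed.
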